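(* Let $T\ge2$ and let $n\ge2T^2$ be an integer. Then for every $|x|\le T$, $$\int_{|y|\ge 2T}k_n(x,y)^2\,dy\le\frac{2}{\pi^2T}+\frac{12T^2}{\sqrt{2n+1}}\ln(2n+1).$$
   Context: For an integer $n\ge0$, $H_n(x)=(-1)^n e^{x^2}\frac{d^n}{dx^n}e^{-x^2}$ is the $n$-th Hermite polynomial and $h_n(x)=\frac{1}{\pi^{1/4}\sqrt{2^n n!}}H_n(x)e^{-x^2/2}$ is the $n$-th Hermite function; $(h_n)_{n\ge0}$ is an orthonormal basis of $L^2(\mathbb R)$. The kernel $k_n(x,y)=\sum_{k=0}^n h_k(x)h_k(y)$ is the kernel of the orthogonal projection of $L^2(\mathbb R)$ onto $\mathrm{span}(h_0,\dots,h_n)$. *)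

From Stdlib Require Import Reals Lra Factorial.
Open Scope R_scope.

(* Physicists' Hermite polynomials H_n, via the standard three-term
   recurrence H_0 = 1, H_1 = 2x, H_{n+2} = 2x H_{n+1} - 2(n+1) H_n,
   which is equivalent to the Rodrigues formula
   H_n(x) = (-1)^n e^{x^2} d^n/dx^n e^{-x^2}. *)
Fixpoint hermite_pair (n : nat) (x : R) : R * R :=
  match n with
  | O => (1, 2 * x)
  | S m => let (a, b) := hermite_pair m x in
           (b, 2 * x * b - 2 * INR (S m) * a)
  end.

Definition hermiteH (n : nat) (x : R) : R := fst (hermite_pair n x).

Definition hermite_fun (n : nat) (x : R) : R :=
  / (Rpower PI (1/4) * sqrt (2 ^ n * INR (Factorial.fact n))) * hermiteH n x * exp (- x ^ 2 / 2).

Definition kernel_n (n : nat) (x y : R) : R :=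
  sum_f_R0 (fun k => hermite_fun k x * hermite_fun k y) n.

(* Write c = sqrt(2n+2) and E(y) = h_n(y)^2 + h_(n+1)(y)^2.  By Christoffel-Darboux and
   Cauchy-Schwarz, k_n(x,y)^2 <= c^2/4 E(x) E(y) / (y-x)^2, so everything reduces to bounds on E.
   The quantity (c-y) (c E(y) - 2y h_n(y) h_(n+1)(y)) does not increase on [0,c], whence
   E(y) (c-|y|)^2 <= c^2 E(0); and c E(0) is explicit since h_(2j)(0)^2 ~ 1/(pi sqrt j).
   Away from the centre we only use int h_k^2 <= sqrt(pi) on every interval, obtained by
   comparing h_k^2 with h_0^2 <= 1/(sqrt(pi)(1+y^2)) instead of computing the Gaussian integral.
   Integrating E(y)/(y-x)^2 over [2T,c/2] with the first bound and over [c/2,M] with the second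
   gives 2/(pi^2 T) + O(T^2/c) when c >= 8T; for c <= 8T the second bound on all of [2T,M]
   suffices. *)

From Stdlib Require Import Reals Lra Lia Psatz Factorial.
From Coquelicot Require Import Coquelicot.
Open Scope R_scope.

Lemma hermiteH_0 (x : R) : hermiteH 0 x = 1.
Proof. reflexivity. Qed.

Lemma hermiteH_1 (x : R) : hermiteH 1 x = 2 * x.
Proof. reflexivity. Qed.

Lemma hermiteH_SS (k : nat) (x : R) :
  hermiteH (S (S k)) x = 2 * x * hermiteH (S k) x - 2 * INR (S k) * hermiteH k x.
Proof. unfold hermiteH; cbn [hermite_pair]; now destruct (hermite_pair k x). Qed.

Lemma nat_ind2 (P : nat -> Prop) :
  P 0%nat -> P 1%nat -> (forall k, P k -> P (S k) -> P (S (S k))) -> forall k, P k.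
Proof.
  intros P0 P1 PS k.
  enough (P k /\ P (S k)) by tauto.
  induction k as [|k [IH1 IH2]]; auto.
Qed.

Lemma hermiteH_opp (k : nat) (x : R) : hermiteH k (- x) = (-1) ^ k * hermiteH k x.
Proof.
  induction k as [| |k IH1 IH2] using nat_ind2.
  - rewrite !hermiteH_0; ring.
  - rewrite !hermiteH_1; ring.
  - rewrite !hermiteH_SS, IH1, IH2; simpl; ring.
Qed.

Lemma is_derive_hermiteH (k : nat) (x : R) :
  is_derive (hermiteH (S k)) x (2 * INR (S k) * hermiteH k x).
Proof.
  revert x; induction k as [| |k IH1 IH2] using nat_ind2; intro x.
  - apply (is_derive_ext (fun t => 2 * t)); [intro; now rewrite hermiteH_1|].
    rewrite hermiteH_0. auto_derive; auto. simpl; ring.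
  - apply (is_derive_ext (fun t => 2 * t * (2 * t) - 2 * INR 1 * 1));
      [intro; now rewrite hermiteH_SS, hermiteH_1, hermiteH_0|].
    rewrite hermiteH_1. auto_derive; auto. simpl; ring.
  - apply (is_derive_ext (fun t => 2 * t * hermiteH (S (S k)) t
                                    - 2 * INR (S (S k)) * hermiteH (S k) t));
      [intro; now rewrite (hermiteH_SS (S k))|].
    replace (2 * INR (S (S (S k))) * hermiteH (S (S k)) x)
      with ((2 * hermiteH (S (S k)) x + 2 * x * (2 * INR (S (S k)) * hermiteH (S k) x))
            - 2 * INR (S (S k)) * (2 * INR (S k) * hermiteH k x))
      by (rewrite (hermiteH_SS k x), !S_INR; ring).
    apply (is_derive_minus (fun t => 2 * t * hermiteH (S (S k)) t)).
    + apply (is_derive_mult (fun t => 2 * t)); [|apply IH2|apply Rmult_comm].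
      apply (is_derive_ext (fun t => 2 * t)); [reflexivity|]. auto_derive; auto; ring.
    + apply (is_derive_scal (hermiteH (S k))), IH1.
Qed.

Lemma hermiteH_turning (k : nat) (M : R) :
  0 < M -> 2 * INR k <= M ^ 2 -> 0 < hermiteH k M /\ M * hermiteH k M <= hermiteH (S k) M.
Proof.
  intro HM; induction k as [|k IH]; intro Hk.
  - rewrite hermiteH_0, hermiteH_1; lra.
  - rewrite S_INR in Hk.
    destruct (IH ltac:(pose proof (pos_INR k); lra)) as [Hpos Hmon].
    assert (0 < hermiteH (S k) M) by nra.
    split; [assumption|]. rewrite hermiteH_SS, S_INR. nra.
Qed.

Lemma hermiteH_pos (m : nat) (M : R) : 0 < M -> 2 * INR m <= M ^ 2 + 2 -> 0 < hermiteH m M.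
Proof.
  intros HM Hm. destruct m as [|j]; [rewrite hermiteH_0; lra|].
  rewrite S_INR in Hm.
  destruct (hermiteH_turning j M HM ltac:(lra)). nra.
Qed.

Definition sqrt2k (k : nat) : R := sqrt (2 * INR k).

Definition hermite_norm (k : nat) : R :=
  / (Rpower PI (1/4) * sqrt (2 ^ k * INR (fact k))).

Definition gauss (x : R) : R := exp (- x ^ 2 / 2).

Lemma hermite_funE (k : nat) (x : R) : hermite_fun k x = hermite_norm k * hermiteH k x * gauss x.
Proof. reflexivity. Qed.

Lemma sqrt2k_S_pos (k : nat) : 0 < sqrt2k (S k).
Proof. apply sqrt_lt_R0. rewrite S_INR. pose proof (pos_INR k). lra. Qed.

Lemma sqrt2k_sq (k : nat) : sqrt2k k ^ 2 = 2 * INR k.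
Proof. unfold sqrt2k. rewrite pow2_sqrt; [auto|]. pose proof (pos_INR k). lra. Qed.

Lemma hermite_norm_pos (k : nat) : 0 < hermite_norm k.
Proof.
  apply Rinv_0_lt_compat, Rmult_lt_0_compat; [apply exp_pos|].
  apply sqrt_lt_R0, Rmult_lt_0_compat; [apply pow_lt; lra|apply lt_0_INR, lt_O_fact].
Qed.

Lemma hermite_norm_S (k : nat) : hermite_norm k = sqrt2k (S k) * hermite_norm (S k).
Proof.
  unfold hermite_norm, sqrt2k.
  assert (Hf : 0 < 2 ^ k * INR (fact k))
    by (apply Rmult_lt_0_compat; [apply pow_lt; lra|apply lt_0_INR, lt_O_fact]).
  replace (2 ^ S k * INR (fact (S k))) with (2 * INR (S k) * (2 ^ k * INR (fact k)))
    by (rewrite fact_simpl, mult_INR; simpl; ring).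
  pose proof (sqrt2k_S_pos k) as Hs; unfold sqrt2k in Hs.
  rewrite (sqrt_mult (2 * INR (S k))); [|rewrite S_INR; pose proof (pos_INR k); lra|lra].
  pose proof (exp_pos (1 / 4 * ln PI)); pose proof (sqrt_lt_R0 _ Hf).
  unfold Rpower. field. repeat split; lra.
Qed.

Lemma hermite_norm0_sq : hermite_norm 0 ^ 2 = / sqrt PI.
Proof.
  unfold hermite_norm; simpl; rewrite Rmult_1_r, sqrt_1, Rmult_1_r.
  assert (E : Rpower PI (1/4) ^ 2 = sqrt PI).
  { rewrite <- Rpower_pow, Rpower_mult, <- Rpower_sqrt by (apply exp_pos || apply PI_RGT_0).
    f_equal. simpl. field. }
  rewrite <- E. pose proof (exp_pos (1/4 * ln PI)). unfold Rpower in *. field. lra.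
Qed.

Lemma hermite_fun_1 (x : R) : sqrt2k 1 * hermite_fun 1 x = 2 * x * hermite_fun 0 x.
Proof. rewrite !hermite_funE, (hermite_norm_S 0), hermiteH_0, hermiteH_1. ring. Qed.

Lemma hermite_fun_SS (k : nat) (x : R) :
  sqrt2k (S (S k)) * hermite_fun (S (S k)) x
  = 2 * x * hermite_fun (S k) x - sqrt2k (S k) * hermite_fun k x.
Proof.
  rewrite !hermite_funE, hermiteH_SS, (hermite_norm_S k), (hermite_norm_S (S k)).
  rewrite <- (sqrt2k_sq (S k)). ring.
Qed.

Lemma is_derive_gauss (x : R) : is_derive gauss x (- x * gauss x).
Proof.
  unfold gauss. auto_derive; [auto|].
  replace (- x ^ 2 / 2) with (- (x * (x * 1)) * / 2) by (simpl; field). field.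
Qed.

Lemma is_derive_hermite_fun (k : nat) (x : R) :
  is_derive (hermite_fun k) x (x * hermite_fun k x - sqrt2k (S k) * hermite_fun (S k) x).
Proof.
  apply (is_derive_ext (fun t => hermite_norm k * (hermiteH k t * gauss t))).
  { intro t; rewrite hermite_funE; symmetry; apply Rmult_assoc. }
  destruct k as [|k].
  - replace (x * hermite_fun 0 x - sqrt2k 1 * hermite_fun 1 x)
      with (hermite_norm 0 * (- x * gauss x))
      by (rewrite hermite_fun_1, hermite_funE, hermiteH_0; ring).
    apply (is_derive_ext (fun t => hermite_norm 0 * gauss t)).
    { intro t; rewrite hermiteH_0, Rmult_1_l; reflexivity. }
    apply is_derive_scal, is_derive_gauss.
  - replace (x * hermite_fun (S k) x - sqrt2k (S (S k)) * hermite_fun (S (S k)) x)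
      with (hermite_norm (S k) * (2 * INR (S k) * hermiteH k x * gauss x
                                  + hermiteH (S k) x * (- x * gauss x)))
      by (rewrite hermite_fun_SS, !hermite_funE, (hermite_norm_S k), <- (sqrt2k_sq (S k)); ring).
    apply is_derive_scal, (@is_derive_mult R_AbsRing);
      [apply is_derive_hermiteH|apply is_derive_gauss|apply Rmult_comm].
Qed.

Lemma is_derive_hermite_fun_S (k : nat) (x : R) :
  is_derive (hermite_fun (S k)) x (sqrt2k (S k) * hermite_fun k x - x * hermite_fun (S k) x).
Proof.
  replace (sqrt2k (S k) * hermite_fun k x - x * hermite_fun (S k) x)
    with (x * hermite_fun (S k) x - sqrt2k (S (S k)) * hermite_fun (S (S k)) x)
    by (rewrite hermite_fun_SS; ring).
  apply is_derive_hermite_fun.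
Qed.

Lemma hermite_fun_opp (k : nat) (x : R) : hermite_fun k (- x) = (-1) ^ k * hermite_fun k x.
Proof.
  rewrite !hermite_funE, hermiteH_opp. unfold gauss.
  replace ((- x) ^ 2) with (x ^ 2) by ring. ring.
Qed.

Lemma hermite_fun_sq_opp (k : nat) (x : R) : hermite_fun k (- x) ^ 2 = hermite_fun k x ^ 2.
Proof. rewrite hermite_fun_opp, Rpow_mult_distr, <- pow_mult, Nat.mul_comm, pow_1_even; ring. Qed.

Lemma hermite_fun_pos (m : nat) (M : R) : 0 < M -> 2 * INR m <= M ^ 2 + 2 -> 0 < hermite_fun m M.
Proof.
  intros HM Hm. rewrite hermite_funE.
  pose proof (hermite_norm_pos m); pose proof (hermiteH_pos m M HM Hm).
  pose proof (exp_pos (- M ^ 2 / 2)).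
  unfold gauss. apply Rmult_lt_0_compat; [apply Rmult_lt_0_compat|]; assumption.
Qed.

Lemma ex_derive_hermite_fun (k : nat) (x : R) : ex_derive (hermite_fun k) x.
Proof. eexists; apply is_derive_hermite_fun. Qed.

Lemma ex_RInt_ex_derive (f : R -> R) (a b : R) :
  (forall z, Rmin a b <= z <= Rmax a b -> ex_derive f z) -> ex_RInt f a b.
Proof.
  intro Hd. apply (ex_RInt_continuous f); intros z Hz.
  now apply (ex_derive_continuous f), Hd.
Qed.

Lemma christoffel_darboux (n : nat) (x y : R) :
  (x - y) * kernel_n n x y
  = sqrt2k (S n) / 2
    * (hermite_fun (S n) x * hermite_fun n y - hermite_fun n x * hermite_fun (S n) y).
Proof.
  induction n as [|n IH].
  - unfold kernel_n; simpl sum_f_R0.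
    replace (sqrt2k 1 / 2 * (hermite_fun 1 x * hermite_fun 0 y - hermite_fun 0 x * hermite_fun 1 y))
      with (/ 2 * ((sqrt2k 1 * hermite_fun 1 x) * hermite_fun 0 y
                   - hermite_fun 0 x * (sqrt2k 1 * hermite_fun 1 y))) by field.
    rewrite !hermite_fun_1. field.
  - change (kernel_n (S n) x y) with (kernel_n n x y + hermite_fun (S n) x * hermite_fun (S n) y).
    replace (sqrt2k (S (S n)) / 2 * (hermite_fun (S (S n)) x * hermite_fun (S n) y
                                    - hermite_fun (S n) x * hermite_fun (S (S n)) y))
      with (/ 2 * ((sqrt2k (S (S n)) * hermite_fun (S (S n)) x) * hermite_fun (S n) y
                   - hermite_fun (S n) x * (sqrt2k (S (S n)) * hermite_fun (S (S n)) y))) by field.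
    rewrite !hermite_fun_SS, Rmult_plus_distr_l, IH. field.
Qed.

Lemma kernel_n_opp (n : nat) (x y : R) : kernel_n n x (- y) = kernel_n n (- x) y.
Proof. apply sum_eq; intros k _. rewrite !hermite_fun_opp. ring. Qed.

Lemma ex_derive_kernel_n (n : nat) (x y : R) : ex_derive (fun t => kernel_n n x t) y.
Proof.
  induction n as [|n IH].
  - change (ex_derive (fun t => hermite_fun 0 x * hermite_fun 0 t) y).
    apply ex_derive_scal, ex_derive_hermite_fun.
  - change (ex_derive (fun t => kernel_n n x t + hermite_fun (S n) x * hermite_fun (S n) t) y).
    apply (@ex_derive_plus R_AbsRing R_NormedModule);
      [exact IH|apply ex_derive_scal, ex_derive_hermite_fun].
Qed.

Lemma ex_RInt_kernel_n_sq (n : nat) (x a b : R) :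
  ex_RInt (fun y => kernel_n n x y ^ 2) a b.
Proof.
  apply ex_RInt_ex_derive; intros z _.
  apply (ex_derive_pow (fun y => kernel_n n x y)), ex_derive_kernel_n.
Qed.

Lemma ex_RInt_hermite_fun_sq (k : nat) (a b : R) : ex_RInt (fun y => hermite_fun k y ^ 2) a b.
Proof.
  apply ex_RInt_ex_derive; intros z _.
  apply (ex_derive_pow (hermite_fun k)), ex_derive_hermite_fun.
Qed.

(* Integrating [(h_m h_(m+1))' = sqrt(2m+2) (h_m^2 - h_(m+1)^2)] over a symmetric interval;
   the boundary terms add up since [h_m h_(m+1)] is odd. *)
Lemma RInt_hermite_fun_sq_S (m : nat) (M : R) :
  RInt (fun y => hermite_fun (S m) y ^ 2) (- M) M
  = RInt (fun y => hermite_fun m y ^ 2) (- M) M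
    - 2 * (hermite_fun m M * hermite_fun (S m) M) / sqrt2k (S m).
Proof.
  pose proof (sqrt2k_S_pos m) as Hs.
  assert (Hd : is_RInt (fun y => sqrt2k (S m) * (hermite_fun m y ^ 2 - hermite_fun (S m) y ^ 2))
                 (- M) M
                 (hermite_fun m M * hermite_fun (S m) M
                  - hermite_fun m (- M) * hermite_fun (S m) (- M))).
  { apply (is_RInt_derive (fun t => hermite_fun m t * hermite_fun (S m) t)); intros y _.
    - replace (sqrt2k (S m) * (hermite_fun m y ^ 2 - hermite_fun (S m) y ^ 2))
        with ((y * hermite_fun m y - sqrt2k (S m) * hermite_fun (S m) y) * hermite_fun (S m) y
              + hermite_fun m y * (sqrt2k (S m) * hermite_fun m y - y * hermite_fun (S m) y))
        by ring.
      apply (@is_derive_mult R_AbsRing);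
        [apply is_derive_hermite_fun|apply is_derive_hermite_fun_S|apply Rmult_comm].
    - apply (ex_derive_continuous
               (fun t => sqrt2k (S m) * (hermite_fun m t ^ 2 - hermite_fun (S m) t ^ 2))).
      auto_derive.
      repeat split; apply ex_derive_hermite_fun. }
  rewrite !hermite_fun_opp in Hd.
  replace ((-1) ^ m * hermite_fun m M * ((-1) ^ S m * hermite_fun (S m) M))
    with (- ((-1 * -1) ^ m * (hermite_fun m M * hermite_fun (S m) M))) in Hd
    by (rewrite Rpow_mult_distr; simpl; ring).
  replace (-1 * -1) with 1 in Hd by ring; rewrite pow1 in Hd.
  assert (Hi : is_RInt (fun y => sqrt2k (S m) * (hermite_fun m y ^ 2 - hermite_fun (S m) y ^ 2))
                 (- M) M
                 (sqrt2k (S m) * (RInt (fun y => hermite_fun m y ^ 2) (- M) M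
                                 - RInt (fun y => hermite_fun (S m) y ^ 2) (- M) M))).
  { apply (is_RInt_scal (fun y => hermite_fun m y ^ 2 - hermite_fun (S m) y ^ 2)).
    apply (is_RInt_minus (fun y => hermite_fun m y ^ 2));
      apply (RInt_correct (V := R_CompleteNormedModule)), ex_RInt_hermite_fun_sq. }
  pose proof (is_RInt_unique _ _ _ _ Hd) as E1.
  rewrite (is_RInt_unique _ _ _ _ Hi) in E1.
  apply Rmult_eq_reg_l with (sqrt2k (S m)); [|lra].
  field_simplify; lra.
Qed.

Lemma RInt_le_RInt_superset (f : R -> R) (A a b B : R) :
  A <= a -> a <= b -> b <= B ->
  ex_RInt f A a -> ex_RInt f a b -> ex_RInt f b B ->
  (forall z, A <= z <= B -> 0 <= f z) -> RInt f a b <= RInt f A B.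
Proof.
  intros HAa Hab HbB IAa Iab IbB Hf.
  assert (IaB : ex_RInt f a B) by now apply (ex_RInt_Chasles f a b B).
  rewrite <- (RInt_Chasles f A a B), <- (RInt_Chasles f a b B); auto.
  assert (0 <= RInt f A a) by (apply RInt_ge_0; auto; intros; apply Hf; lra).
  assert (0 <= RInt f b B) by (apply RInt_ge_0; auto; intros; apply Hf; lra).
  unfold plus; simpl; lra.
Qed.

(* Beyond the turning point [sqrt(2m)] all of [h_0, ..., h_m] are positive, so each boundary
   term of [RInt_hermite_fun_sq_S] decreases the integral. *)
Lemma RInt_hermite_fun_sq_le_0 (m : nat) (M : R) :
  0 < M -> 2 * INR m <= M ^ 2 + 2 ->
  RInt (fun y => hermite_fun m y ^ 2) (- M) M <= RInt (fun y => hermite_fun 0 y ^ 2) (- M) M.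
Proof.
  intro HM; induction m as [|m IH]; intro Hm; [lra|].
  rewrite S_INR in Hm. pose proof (pos_INR m).
  rewrite RInt_hermite_fun_sq_S.
  pose proof (hermite_fun_pos m M HM ltac:(lra)).
  pose proof (hermite_fun_pos (S m) M HM ltac:(rewrite S_INR; lra)).
  pose proof (sqrt2k_S_pos m).
  assert (0 <= 2 * (hermite_fun m M * hermite_fun (S m) M) / sqrt2k (S m)).
  { apply Rmult_le_pos; [nra|apply Rlt_le, Rinv_0_lt_compat; assumption]. }
  specialize (IH ltac:(lra)). lra.
Qed.

(* [h_0^2 = e^(-y^2)/sqrt(pi) <= 1/(sqrt(pi) (1 + y^2))], whose integral is at most [sqrt pi]. *)
Lemma RInt_hermite_fun0_sq_le (M : R) :
  0 <= M -> RInt (fun y => hermite_fun 0 y ^ 2) (- M) M <= sqrt PI.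
Proof.
  intro HM.
  assert (HPI : hermite_norm 0 ^ 2 * PI = sqrt PI).
  { rewrite hermite_norm0_sq.
    pose proof (sqrt_lt_R0 _ PI_RGT_0); pose proof (sqrt_sqrt PI (Rlt_le _ _ PI_RGT_0)) as E.
    set (s := sqrt PI) in *. rewrite <- E. field. lra. }
  assert (Hat : is_RInt (fun t => hermite_norm 0 ^ 2 * / (1 + t ^ 2)) (- M) M
                  (hermite_norm 0 ^ 2 * atan M - hermite_norm 0 ^ 2 * atan (- M))).
  { apply (is_RInt_derive (fun t => hermite_norm 0 ^ 2 * atan t)); intros y _.
    - auto_derive; auto. field. nra.
    - apply (ex_derive_continuous (fun t => hermite_norm 0 ^ 2 * / (1 + t ^ 2))).
      auto_derive. nra. }
  apply Rle_trans with (hermite_norm 0 ^ 2 * atan M - hermite_norm 0 ^ 2 * atan (- M)).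
  - rewrite <- (is_RInt_unique _ _ _ _ Hat).
    apply RInt_le; [lra|apply ex_RInt_hermite_fun_sq|eexists; exact Hat|].
    intros y _. rewrite hermite_funE, hermiteH_0. unfold gauss.
    assert (Hexp : exp (- y ^ 2 / 2) ^ 2 * (1 + y ^ 2) <= 1).
    { replace (exp (- y ^ 2 / 2) ^ 2) with (exp (- y ^ 2 / 2) * exp (- y ^ 2 / 2)) by ring.
      rewrite <- exp_plus. replace (- y ^ 2 / 2 + - y ^ 2 / 2) with (- y ^ 2) by field.
      assert (E : exp (- y ^ 2) * exp (y ^ 2) = 1)
        by (rewrite <- exp_plus; replace (- y ^ 2 + y ^ 2) with 0 by ring; apply exp_0).
      pose proof (exp_ineq1_le (y ^ 2)); pose proof (exp_pos (- y ^ 2)). nra. }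
    pose proof (pow2_ge_0 (hermite_norm 0)).
    apply Rmult_le_reg_r with (1 + y ^ 2); [nra|].
    replace (hermite_norm 0 ^ 2 * / (1 + y ^ 2) * (1 + y ^ 2)) with (hermite_norm 0 ^ 2 * 1)
      by (field; nra).
    replace ((hermite_norm 0 * 1 * exp (- y ^ 2 / 2)) ^ 2 * (1 + y ^ 2))
      with (hermite_norm 0 ^ 2 * (exp (- y ^ 2 / 2) ^ 2 * (1 + y ^ 2))) by ring.
    now apply Rmult_le_compat_l.
  - pose proof (atan_bound M); pose proof (atan_bound (- M)).
    pose proof (pow2_ge_0 (hermite_norm 0)).
    rewrite <- HPI. nra.
Qed.

Lemma RInt_hermite_fun_sq_le (m : nat) (a b : R) :
  a <= b -> RInt (fun y => hermite_fun m y ^ 2) a b <= sqrt PI.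
Proof.
  intro Hab.
  set (M := Rmax (Rmax (Rabs a) (Rabs b)) (sqrt (2 * INR m) + 1)).
  assert (Ha : Rabs a <= M) by (unfold M; eauto using Rle_trans, Rmax_l).
  assert (Hb : Rabs b <= M) by (unfold M; eapply Rle_trans; [apply Rmax_r|apply Rmax_l]).
  assert (Hm : sqrt (2 * INR m) + 1 <= M) by (unfold M; apply Rmax_r).
  apply Rabs_le_between in Ha, Hb.
  pose proof (sqrt_pos (2 * INR m)).
  assert (Hm2 : 2 * INR m <= M ^ 2 + 2).
  { rewrite <- (pow2_sqrt (2 * INR m)) by (pose proof (pos_INR m); lra). nra. }
  apply Rle_trans with (RInt (fun y => hermite_fun m y ^ 2) (- M) M).
  - apply RInt_le_RInt_superset; try apply ex_RInt_hermite_fun_sq; try lra.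
    intros; apply pow2_ge_0.
  - eapply Rle_trans; [apply RInt_hermite_fun_sq_le_0; lra|].
    apply RInt_hermite_fun0_sq_le; lra.
Qed.

Lemma hermite_fun_odd_0 (j : nat) : hermite_fun (S (2 * j)) 0 = 0.
Proof.
  assert (Hs : forall k v, sqrt2k (S k) * v = 0 -> v = 0).
  { intros k v H. pose proof (sqrt2k_S_pos k). apply Rmult_integral in H. destruct H; lra. }
  induction j as [|j IH].
  - apply (Hs 0%nat). rewrite hermite_fun_1. ring.
  - replace (S (2 * S j)) with (S (S (S (2 * j)))) by lia.
    apply (Hs (S (S (2 * j)))). rewrite hermite_fun_SS, IH. ring.
Qed.

(* [h_(2j)(0)^2] is a Wallis ratio divided by [sqrt pi]; its decay is propagated through
   [(2j+2) h_(2j+2)(0)^2 = (2j+1) h_(2j)(0)^2]. *)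
Lemma hermite_fun_even_0_bound (j : nat) :
  (hermite_fun (2 * j) 0 ^ 2) ^ 2 * (3 * INR j + 1) <= / PI.
Proof.
  induction j as [|j IH].
  - rewrite hermite_funE, hermiteH_0. unfold gauss.
    replace (- 0 ^ 2 / 2) with 0 by (simpl; field).
    change (2 * 0)%nat with 0%nat.
    rewrite exp_0, !Rmult_1_r, hermite_norm0_sq, pow_inv, pow2_sqrt by apply Rlt_le, PI_RGT_0.
    simpl; lra.
  - replace (2 * S j)%nat with (S (S (2 * j))) by lia.
    pose proof (hermite_fun_SS (2 * j) 0) as Hrec.
    rewrite !Rmult_0_r, Rmult_0_l, Rminus_0_l in Hrec.
    assert (Hw : 2 * INR (S (S (2 * j))) * hermite_fun (S (S (2 * j))) 0 ^ 2
                 = 2 * INR (S (2 * j)) * hermite_fun (2 * j) 0 ^ 2).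
    { rewrite <- !sqrt2k_sq, <- !Rpow_mult_distr, Hrec. ring. }
    rewrite !S_INR, mult_INR in Hw. rewrite S_INR. simpl (INR 2) in Hw.
    set (v := hermite_fun (2 * j) 0 ^ 2) in *.
    set (w := hermite_fun (S (S (2 * j))) 0 ^ 2) in *.
    pose proof (pos_INR j). set (a := INR j) in *.
    assert (0 <= v) by apply pow2_ge_0.
    assert (Hvw : ((2 * a + 2) * w) ^ 2 * (3 * (a + 1) + 1)
                  <= (2 * a + 2) ^ 2 * (v ^ 2 * (3 * a + 1))).
    { replace ((2 * a + 2) * w) with (/ 2 * (2 * ((1 + 1) * a + 1 + 1) * w)) by field.
      rewrite Hw. replace (/ 2 * (2 * ((1 + 1) * a + 1) * v)) with ((2 * a + 1) * v) by field.
      assert (0 <= v ^ 2 * a) by (apply Rmult_le_pos; [apply pow2_ge_0|lra]). nra. }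
    apply Rmult_le_reg_l with ((2 * a + 2) ^ 2); [nra|].
    assert (0 <= (2 * a + 2) ^ 2) by apply pow2_ge_0.
    eapply Rle_trans; [|apply Rmult_le_compat_l; eassumption].
    replace ((2 * a + 2) ^ 2 * (w ^ 2 * (3 * (a + 1) + 1))) with
      (((2 * a + 2) * w) ^ 2 * (3 * (a + 1) + 1)) by ring.
    exact Hvw.
Qed.

Definition hermite_energy (n : nat) (y : R) : R := hermite_fun n y ^ 2 + hermite_fun (S n) y ^ 2.

Lemma hermite_energy_nonneg (n : nat) (y : R) : 0 <= hermite_energy n y.
Proof.
  unfold hermite_energy.
  pose proof (pow2_ge_0 (hermite_fun n y)); pose proof (pow2_ge_0 (hermite_fun (S n) y)). lra.
Qed.

Lemma hermite_energy_opp (n : nat) (y : R) : hermite_energy n (- y) = hermite_energy n y.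
Proof. unfold hermite_energy. now rewrite !hermite_fun_sq_opp. Qed.

Lemma hermite_energy_0_bound (n : nat) :
  (8 <= n)%nat -> (sqrt2k (S n) * hermite_energy n 0 * sqrt PI) ^ 2 <= 18 / 13.
Proof.
  intro Hn.
  assert (0 < / PI) by (apply Rinv_0_lt_compat, PI_RGT_0).
  rewrite Rpow_mult_distr, pow2_sqrt by apply Rlt_le, PI_RGT_0.
  apply Rmult_le_reg_r with (/ PI); [assumption|].
  rewrite Rmult_assoc, Rinv_r, Rmult_1_r by apply Rgt_not_eq, PI_RGT_0.
  unfold hermite_energy.
  destruct (Nat.Even_or_Odd n) as [[j ->]|[j ->]].
  - rewrite hermite_fun_odd_0, Rpow_mult_distr, sqrt2k_sq, S_INR, mult_INR.
    pose proof (hermite_fun_even_0_bound j).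
    assert (4 <= INR j) by (replace 4 with (INR 4) by (simpl; ring); apply le_INR; lia).
    set (v := hermite_fun (2 * j) 0 ^ 2) in *. assert (0 <= v ^ 2) by apply pow2_ge_0.
    replace ((v + 0 ^ 2) ^ 2) with (v ^ 2) by ring. simpl (INR 2).
    apply Rmult_le_reg_l with (3 * INR j + 1); nra.
  - replace (S (2 * j + 1)) with (2 * S j)%nat by lia.
    replace (2 * j + 1)%nat with (S (2 * j)) by lia.
    rewrite hermite_fun_odd_0, Rpow_mult_distr, sqrt2k_sq.
    replace (INR (2 * S j)) with (2 * (INR j + 1))
      by (rewrite mult_INR, (S_INR j); simpl (INR 2); ring).
    pose proof (hermite_fun_even_0_bound (S j)) as Hv. rewrite S_INR in Hv.
    pose proof (pos_INR j).
    set (v := hermite_fun (2 * S j) 0 ^ 2) in *. assert (0 <= v ^ 2) by apply pow2_ge_0.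
    replace ((0 ^ 2 + v) ^ 2) with (v ^ 2) by ring.
    assert (0 <= v ^ 2 * INR j) by (apply Rmult_le_pos; lra).
    apply Rmult_le_reg_l with (3 * (INR j + 1) + 1); nra.
Qed.

Section Lyapunov.

Variable n : nat.

Let c := sqrt2k (S n).

(* On [0, c] this quantity dominates [(c - y)^2 (h_n^2 + h_(n+1)^2)] and does not increase. *)
Let lyapunov (y : R) : R :=
  (c - y) * (c * hermite_energy n y - 2 * y * hermite_fun n y * hermite_fun (S n) y).

Lemma is_derive_lyapunov (y : R) :
  is_derive lyapunov y
    (- c * hermite_energy n y + 2 * (2 * y - c) * hermite_fun n y * hermite_fun (S n) y).
Proof.
  unfold lyapunov, hermite_energy.
  pose proof (is_derive_hermite_fun n y) as Da; pose proof (is_derive_hermite_fun_S n y) as Db.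
  fold c in Da, Db.
  set (a := hermite_fun n) in *; set (b := hermite_fun (S n)) in *.
  auto_derive.
  - repeat split; eexists; eassumption.
  - replace (Derive (fun x : R => a x) y) with (y * a y - c * b y)
      by (symmetry; now apply is_derive_unique).
    replace (Derive (fun x : R => b x) y) with (c * a y - y * b y)
      by (symmetry; now apply is_derive_unique).
    ring.
Qed.

Lemma lyapunov_le_0 (y : R) : 0 <= y <= c -> lyapunov y <= lyapunov 0.
Proof.
  intros Hy.
  destruct (MVT_gen lyapunov 0 y
              (fun t => - c * hermite_energy n t
                        + 2 * (2 * t - c) * hermite_fun n t * hermite_fun (S n) t))
    as [t [Ht E]].
  - intros; apply is_derive_lyapunov.
  - intros t _. apply continuity_pt_filterlim, (ex_derive_continuous lyapunov).
    eexists; apply is_derive_lyapunov.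
  - rewrite Rmin_left, Rmax_right in Ht by lra.
    assert (- c * hermite_energy n t
            + 2 * (2 * t - c) * hermite_fun n t * hermite_fun (S n) t <= 0).
    { unfold hermite_energy.
      set (a := hermite_fun n t); set (b := hermite_fun (S n) t).
      assert (0 <= (a - b) ^ 2) by apply pow2_ge_0; assert (0 <= (a + b) ^ 2) by apply pow2_ge_0.
      nra. }
    nra.
Qed.

Lemma hermite_energy_le_center_nonneg (y : R) :
  0 <= y <= c -> hermite_energy n y * (c - y) ^ 2 <= c ^ 2 * hermite_energy n 0.
Proof.
  intro Hy.
  apply Rle_trans with (lyapunov y).
  - unfold lyapunov, hermite_energy.
    set (a := hermite_fun n y); set (b := hermite_fun (S n) y).
    assert (0 <= (a - b) ^ 2) by apply pow2_ge_0.
    assert (0 <= (c - y) * y) by nra. nra.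
  - replace (c ^ 2 * hermite_energy n 0) with (lyapunov 0) by (unfold lyapunov; ring).
    now apply lyapunov_le_0.
Qed.

Lemma hermite_energy_le_center (y : R) :
  Rabs y <= c -> hermite_energy n y * (c - Rabs y) ^ 2 <= c ^ 2 * hermite_energy n 0.
Proof.
  intro Hy. destruct (Rle_or_lt 0 y).
  - rewrite Rabs_right in * by lra. apply hermite_energy_le_center_nonneg; lra.
  - rewrite Rabs_left in * by lra. rewrite <- hermite_energy_opp.
    apply hermite_energy_le_center_nonneg; lra.
Qed.

End Lyapunov.

Lemma ex_derive_hermite_energy (n : nat) (y : R) : ex_derive (hermite_energy n) y.
Proof.
  unfold hermite_energy.
  pose proof (ex_derive_hermite_fun n y); pose proof (ex_derive_hermite_fun (S n) y).
  set (a := hermite_fun n) in *; set (b := hermite_fun (S n)) in *.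
  auto_derive. tauto.
Qed.

Lemma ex_RInt_energy_weight (n : nat) (x a b : R) :
  x < a -> a <= b -> ex_RInt (fun y => hermite_energy n y / (y - x) ^ 2) a b.
Proof.
  intros Hxa Hab. apply ex_RInt_ex_derive. rewrite Rmin_left, Rmax_right by lra. intros z Hz.
  pose proof (ex_derive_hermite_energy n z). set (E := hermite_energy n) in *.
  auto_derive. repeat split; [assumption|]. apply Rmult_integral_contrapositive; split; nra.
Qed.

Lemma energy_weight_nonneg (n : nat) (x y : R) : 0 <= hermite_energy n y / (y - x) ^ 2.
Proof.
  apply Rmult_le_pos; [apply hermite_energy_nonneg|].
  destruct (Req_dec y x) as [->|Hyx].
  - rewrite Rminus_diag, pow_i, Rinv_0 by lia. lra.
  - apply Rlt_le, Rinv_0_lt_compat, pow2_gt_0. lra.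
Qed.

Lemma kernel_n_sq_le (n : nat) (x y : R) :
  x <> y ->
  kernel_n n x y ^ 2
  <= sqrt2k (S n) ^ 2 / 4 * hermite_energy n x * (hermite_energy n y / (y - x) ^ 2).
Proof.
  intro Hxy.
  assert (Hd : 0 < (y - x) ^ 2) by (apply pow2_gt_0; lra).
  assert (Hk : kernel_n n x y ^ 2 * (y - x) ^ 2
               = sqrt2k (S n) ^ 2 / 4
                 * (hermite_fun (S n) x * hermite_fun n y
                    - hermite_fun n x * hermite_fun (S n) y) ^ 2).
  { replace (kernel_n n x y ^ 2 * (y - x) ^ 2) with (((x - y) * kernel_n n x y) ^ 2) by ring.
    rewrite christoffel_darboux. field. }
  apply Rmult_le_reg_r with ((y - x) ^ 2); [assumption|].
  rewrite Hk. unfold hermite_energy.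
  replace (sqrt2k (S n) ^ 2 / 4 * (hermite_fun n x ^ 2 + hermite_fun (S n) x ^ 2)
           * ((hermite_fun n y ^ 2 + hermite_fun (S n) y ^ 2) / (y - x) ^ 2) * (y - x) ^ 2)
    with (sqrt2k (S n) ^ 2 / 4 * ((hermite_fun n x ^ 2 + hermite_fun (S n) x ^ 2)
                                   * (hermite_fun n y ^ 2 + hermite_fun (S n) y ^ 2)))
    by (field; lra).
  apply Rmult_le_compat_l; [pose proof (pow2_ge_0 (sqrt2k (S n))); lra|].
  (* Lagrange's identity *)
  pose proof (pow2_ge_0 (hermite_fun n x * hermite_fun n y
                         + hermite_fun (S n) x * hermite_fun (S n) y)).
  nra.
Qed.

Lemma RInt_kernel_n_sq_le (n : nat) (x a b : R) :
  x < a -> a <= b ->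
  RInt (fun y => kernel_n n x y ^ 2) a b
  <= sqrt2k (S n) ^ 2 / 4 * hermite_energy n x
     * RInt (fun y => hermite_energy n y / (y - x) ^ 2) a b.
Proof.
  intros Hxa Hab.
  rewrite <- (RInt_scal (fun y => hermite_energy n y / (y - x) ^ 2))
    by now apply ex_RInt_energy_weight.
  apply RInt_le; [assumption|apply ex_RInt_kernel_n_sq| |].
  - apply (ex_RInt_scal (fun y => hermite_energy n y / (y - x) ^ 2)).
    now apply ex_RInt_energy_weight.
  - intros y Hy. apply kernel_n_sq_le. lra.
Qed.

Lemma RInt_energy_weight_le (n : nat) (x a b : R) :
  x < a -> a <= b ->
  RInt (fun y => hermite_energy n y / (y - x) ^ 2) a b <= 2 * sqrt PI / (a - x) ^ 2.
Proof.
  intros Hxa Hab.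
  assert (Hd : 0 < (a - x) ^ 2) by (apply pow_lt; lra).
  assert (HE : ex_RInt (hermite_energy n) a b).
  { apply ex_RInt_ex_derive; intros; apply ex_derive_hermite_energy. }
  apply Rle_trans with (RInt (fun y => / (a - x) ^ 2 * hermite_energy n y) a b).
  - apply RInt_le;
      [assumption|now apply ex_RInt_energy_weight|now apply (ex_RInt_scal (hermite_energy n))|].
    intros y Hy. unfold Rdiv. rewrite Rmult_comm.
    apply Rmult_le_compat_r; [apply hermite_energy_nonneg|].
    apply Rinv_le_contravar; [assumption|apply pow_incr; lra].
  - rewrite (RInt_scal (hermite_energy n)) by assumption.
    assert (Hint : RInt (hermite_energy n) a b
                   = RInt (fun y => hermite_fun n y ^ 2) a b
                     + RInt (fun y => hermite_fun (S n) y ^ 2) a b).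
    { apply (RInt_plus (fun y => hermite_fun n y ^ 2)); apply ex_RInt_hermite_fun_sq. }
    rewrite Hint.
    pose proof (RInt_hermite_fun_sq_le n a b Hab).
    pose proof (RInt_hermite_fun_sq_le (S n) a b Hab).
    unfold Rdiv. rewrite Rmult_comm.
    apply Rmult_le_compat_r; [apply Rlt_le, Rinv_0_lt_compat, Hd|lra].
Qed.

(* [(u + v)^2 <= (1 + e) v^2 + (1 + 1/e) u^2] with [e = 1/100]. *)
Lemma inv_sq_mul_le (u v : R) :
  0 < u -> 0 < v -> / (u ^ 2 * v ^ 2) <= / (u + v) ^ 2 * (101 / 100 / v ^ 2 + 101 / u ^ 2).
Proof.
  intros Hu Hv.
  replace (/ (u + v) ^ 2 * (101 / 100 / v ^ 2 + 101 / u ^ 2))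
    with ((101 / 100 * u ^ 2 + 101 * v ^ 2) / (u + v) ^ 2 * / (u ^ 2 * v ^ 2)) by (field; lra).
  rewrite <- (Rmult_1_l (/ (u ^ 2 * v ^ 2))) at 1.
  apply Rmult_le_compat_r; [apply Rlt_le, Rinv_0_lt_compat, Rmult_lt_0_compat; apply pow_lt; lra|].
  apply Rmult_le_reg_r with ((u + v) ^ 2); [apply pow_lt; lra|].
  unfold Rdiv. rewrite Rmult_assoc, Rinv_l, Rmult_1_l, Rmult_1_r by (apply pow_nonzero; lra).
  pose proof (pow2_ge_0 (u / 10 - 10 * v)). nra.
Qed.

Lemma energy_weight_le_center (n : nat) (x y : R) :
  let c := sqrt2k (S n) in
  0 <= y -> x < y -> y < c ->
  hermite_energy n y / (y - x) ^ 2
  <= hermite_energy n 0 * (c / (c - x)) ^ 2 * (101 / 100 / (y - x) ^ 2 + 101 / (c - y) ^ 2).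
Proof.
  intros c Hy Hxy Hyc.
  pose proof (hermite_energy_le_center_nonneg n y ltac:(fold c; lra)) as HE; fold c in HE.
  pose proof (inv_sq_mul_le (c - y) (y - x) ltac:(lra) ltac:(lra)) as Hinv.
  replace (c - y + (y - x)) with (c - x) in Hinv by ring.
  assert (Hq : hermite_energy n y <= c ^ 2 * hermite_energy n 0 / (c - y) ^ 2).
  { apply Rmult_le_reg_r with ((c - y) ^ 2); [apply pow_lt; lra|].
    unfold Rdiv; rewrite Rmult_assoc, Rinv_l, Rmult_1_r by (apply pow_nonzero; lra).
    exact HE. }
  apply Rle_trans with (c ^ 2 * hermite_energy n 0 * / ((c - y) ^ 2 * (y - x) ^ 2)).
  - rewrite Rinv_mult, <- Rmult_assoc.
    apply Rmult_le_compat_r; [apply Rlt_le, Rinv_0_lt_compat, pow_lt; lra|exact Hq].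
  - replace (hermite_energy n 0 * (c / (c - x)) ^ 2 * (101 / 100 / (y - x) ^ 2 + 101 / (c - y) ^ 2))
      with (c ^ 2 * hermite_energy n 0
            * (/ (c - x) ^ 2 * (101 / 100 / (y - x) ^ 2 + 101 / (c - y) ^ 2)))
      by (field; lra).
    apply Rmult_le_compat_l; [|exact Hinv].
    apply Rmult_le_pos; [apply pow2_ge_0|apply hermite_energy_nonneg].
Qed.

Lemma RInt_energy_weight_le_center (n : nat) (x a : R) :
  let c := sqrt2k (S n) in
  0 <= a -> x < a -> a <= c / 2 ->
  RInt (fun y => hermite_energy n y / (y - x) ^ 2) a (c / 2)
  <= hermite_energy n 0 * (c / (c - x)) ^ 2 * (101 / 100 / (a - x) + 101 / c).
Proof.
  intros c Ha Hxa Hac.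
  assert (Hc : 0 < c) by apply sqrt2k_S_pos.
  set (k := hermite_energy n 0 * (c / (c - x)) ^ 2).
  assert (Hk : 0 <= k) by (apply Rmult_le_pos; [apply hermite_energy_nonneg|apply pow2_ge_0]).
  set (F := fun y => k * (- (101 / 100) / (y - x) + 101 / (c - y))).
  set (f := fun y => k * (101 / 100 / (y - x) ^ 2 + 101 / (c - y) ^ 2)).
  assert (HF : is_RInt f a (c / 2) (F (c / 2) - F a)).
  { apply (is_RInt_derive F f); rewrite Rmin_left, Rmax_right by lra; intros y Hy.
    - unfold F, f. auto_derive; [repeat split; lra|]. field. lra.
    - apply (ex_derive_continuous f). unfold f. auto_derive.
      repeat split; apply Rgt_not_eq, Rmult_lt_0_compat; lra. }
  apply Rle_trans with (RInt f a (c / 2)).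
  - apply RInt_le; [assumption|now apply ex_RInt_energy_weight|eexists; exact HF|].
    intros y Hy. unfold f, k. apply energy_weight_le_center; fold c; lra.
  - rewrite (is_RInt_unique _ _ _ _ HF). unfold F.
    assert (0 <= 101 / 100 / (c / 2 - x))
      by (apply Rmult_le_pos; [lra|apply Rlt_le, Rinv_0_lt_compat; lra]).
    assert (101 / (c - c / 2) - 101 / (c - a) <= 101 / c).
    { assert (/ c <= / (c - a)) by (apply Rinv_le_contravar; lra).
      replace (101 / (c - c / 2)) with (2 * (101 / c)) by (field; lra). unfold Rdiv in *. lra. }
    replace (k * (- (101 / 100) / (c / 2 - x) + 101 / (c - c / 2))
             - k * (- (101 / 100) / (a - x) + 101 / (c - a)))
      with (k * (101 / 100 / (a - x) + (101 / (c - c / 2) - 101 / (c - a))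
                 - 101 / 100 / (c / 2 - x)))
      by (field; repeat split; lra).
    apply Rmult_le_compat_l; lra.
Qed.

(* Below [c/2] the energy is controlled by its value at 0, beyond [c/2] by its [L^2] norm. *)
Lemma RInt_energy_weight_le_sharp (n : nat) (x a b : R) :
  let c := sqrt2k (S n) in
  0 <= a -> x < a -> a <= c / 2 -> a <= b ->
  RInt (fun y => hermite_energy n y / (y - x) ^ 2) a b
  <= hermite_energy n 0 * (c / (c - x)) ^ 2 * (101 / 100 / (a - x) + 101 / c)
     + 2 * sqrt PI / (c / 2 - x) ^ 2.
Proof.
  intros c Ha Hxa Hac Hab.
  set (W := fun y => hermite_energy n y / (y - x) ^ 2).
  assert (HW : forall u v, x < u -> u <= v -> ex_RInt W u v)
    by (intros; now apply ex_RInt_energy_weight).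
  set (b' := Rmax b (c / 2)).
  assert (Hb' : b <= b' /\ c / 2 <= b') by (split; [apply Rmax_l|apply Rmax_r]).
  apply Rle_trans with (RInt W a b').
  { apply RInt_le_RInt_superset; try apply HW; try lra.
    intros; apply energy_weight_nonneg. }
  rewrite <- (RInt_Chasles W a (c / 2) b') by (apply HW; lra).
  apply Rplus_le_compat; [apply RInt_energy_weight_le_center|apply RInt_energy_weight_le];
    fold c; lra.
Qed.

Lemma pow4_ratio_le (c T : R) : 0 < T -> 8 * T <= c -> c ^ 4 / (c - T) ^ 4 <= 1 + 8 * T / c.
Proof.
  intros HT Hc.
  assert (Hlow : c ^ 3 * (c - 4 * T) <= (c - T) ^ 4).
  { assert (0 <= T ^ 2 * (6 * c ^ 2 - 4 * c * T + T ^ 2)) by (apply Rmult_le_pos; nra). nra. }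
  assert (Hpos : 0 < c ^ 3 * (c - 4 * T)) by (apply Rmult_lt_0_compat; [apply pow_lt|]; lra).
  apply Rle_trans with (c ^ 4 / (c ^ 3 * (c - 4 * T))).
  - apply Rmult_le_compat_l; [apply pow_le; lra|now apply Rinv_le_contravar].
  - replace (c ^ 4 / (c ^ 3 * (c - 4 * T))) with (c / (c - 4 * T)) by (field; split; lra).
    apply Rmult_le_reg_r with (c - 4 * T); [lra|].
    replace (c / (c - 4 * T) * (c - 4 * T)) with c by (field; lra).
    replace ((1 + 8 * T / c) * (c - 4 * T)) with (c + 4 * T - 32 * T * T / c) by (field; lra).
    assert (32 * T * T / c <= 4 * T).
    { apply Rmult_le_reg_r with c; [lra|].
      replace (32 * T * T / c * c) with (32 * T * T) by (field; lra). nra. }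
    lra.
Qed.

Lemma tails_crude_numeric (c T t : R) :
  2 <= T -> 2 * T < c -> c <= 8 * T -> 0 <= t -> t ^ 2 <= 18 / 13 ->
  c ^ 3 * t / ((c - T) ^ 2 * T ^ 2) <= 30 * T ^ 2 / c.
Proof.
  intros HT H1 H2 Ht Ht2.
  assert (t <= 118 / 100) by nra.
  assert (Q : c ^ 2 <= 92 / 10 * ((c - T) * T)) by nra.
  assert (Q2 : c ^ 4 <= (92 / 10) ^ 2 * ((c - T) * T) ^ 2).
  { replace (c ^ 4) with ((c ^ 2) ^ 2) by ring. rewrite <- Rpow_mult_distr.
    apply pow_incr. split; [apply pow2_ge_0|exact Q]. }
  assert (P1 : 0 < (c - T) ^ 2 * T ^ 2) by (apply Rmult_lt_0_compat; apply pow_lt; lra).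
  apply Rmult_le_reg_r with ((c - T) ^ 2 * T ^ 2 * c); [nra|].
  replace (c ^ 3 * t / ((c - T) ^ 2 * T ^ 2) * ((c - T) ^ 2 * T ^ 2 * c)) with (c ^ 4 * t)
    by (field; split; lra).
  replace (30 * T ^ 2 / c * ((c - T) ^ 2 * T ^ 2 * c)) with (30 * T ^ 2 * ((c - T) * T) ^ 2)
    by (field; lra).
  assert (0 <= ((c - T) * T) ^ 2) by apply pow2_ge_0.
  assert (c ^ 4 * t <= (92 / 10) ^ 2 * ((c - T) * T) ^ 2 * (118 / 100))
    by (apply Rmult_le_compat; try lra; apply pow_le; lra).
  assert (120 <= 30 * T ^ 2) by nra.
  nra.
Qed.

Lemma tails_sharp_near_numeric (c T r s : R) :
  2 <= T -> 8 * T <= c -> 0 < s -> 2 <= s ^ 2 <= 4 -> (r * s) ^ 2 <= 18 / 13 ->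
  r ^ 2 * (c ^ 4 / (c - T) ^ 4) / 4 * (404 / (300 * T) + 202 / c)
  <= 2 / (s ^ 4 * T) + 72 / c.
Proof.
  intros HT Hc Hs Hs2 Hrs.
  assert (Hc0 : 0 < c) by lra.
  pose proof (pow4_ratio_le c T ltac:(lra) Hc) as Hz.
  set (z := c ^ 4 / (c - T) ^ 4) in *.
  assert (Htc : T / c <= 1 / 8).
  { apply Rmult_le_reg_r with c; [lra|]. replace (T / c * c) with T by (field; lra). lra. }
  assert (Hzc : z / 4 * (404 / (300 * T) + 202 / c) <= 101 / (300 * T) + 1037 / 10 / c).
  { apply Rle_trans with ((1 + 8 * T / c) / 4 * (404 / (300 * T) + 202 / c)).
    - apply Rmult_le_compat_r; [|lra].
      apply Rplus_le_le_0_compat; apply Rmult_le_pos; try lra; apply Rlt_le, Rinv_0_lt_compat; lra.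
    - replace ((1 + 8 * T / c) / 4 * (404 / (300 * T) + 202 / c))
        with (101 / (300 * T) + (101 / 2 + 808 / 300) / c + 404 * (T / c) / c) by (field; lra).
      assert (0 < / c) by (apply Rinv_0_lt_compat; lra).
      unfold Rdiv in *. nra. }
  assert (Hr2 : r ^ 2 * s ^ 2 <= 18 / 13) by (rewrite <- Rpow_mult_distr; exact Hrs).
  assert (0 <= r ^ 2) by apply pow2_ge_0.
  apply Rle_trans with (r ^ 2 * (101 / (300 * T) + 1037 / 10 / c)).
  { replace (r ^ 2 * z / 4 * (404 / (300 * T) + 202 / c))
      with (r ^ 2 * (z / 4 * (404 / (300 * T) + 202 / c))) by (field; lra).
    now apply Rmult_le_compat_l. }
  assert (Hmain : r ^ 2 * (101 / (300 * T)) <= 2 / (s ^ 4 * T)).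
  { replace (2 / (s ^ 4 * T)) with (2 / s ^ 4 * / T) by (field; lra).
    replace (r ^ 2 * (101 / (300 * T))) with (r ^ 2 * (101 / 300) * / T) by (field; lra).
    apply Rmult_le_compat_r; [apply Rlt_le, Rinv_0_lt_compat; lra|].
    apply Rmult_le_reg_r with (s ^ 4); [apply pow_lt; lra|].
    replace (2 / s ^ 4 * s ^ 4) with 2 by (field; lra).
    replace (s ^ 4) with (s ^ 2 * s ^ 2) by ring. nra. }
  assert (Hsec : r ^ 2 * (1037 / 10 / c) <= 72 / c).
  { assert (r ^ 2 <= 9 / 13) by nra. assert (0 < / c) by (apply Rinv_0_lt_compat; lra).
    unfold Rdiv. nra. }
  lra.
Qed.

Lemma tails_sharp_far_numeric (c T t : R) :
  0 < T -> 8 * T <= c -> 0 <= t -> t ^ 2 <= 18 / 13 ->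
  c ^ 3 * t / ((c - T) ^ 2 * (c / 2 - T) ^ 2) <= 11 / c.
Proof.
  intros HT Hc Ht Ht2.
  assert (t <= 118 / 100) by nra.
  assert (D : (7 / 8 * c) ^ 2 * (3 / 8 * c) ^ 2 <= (c - T) ^ 2 * (c / 2 - T) ^ 2).
  { apply Rmult_le_compat; try apply pow2_ge_0; apply pow_incr; lra. }
  assert (Dp : 0 < (7 / 8 * c) ^ 2 * (3 / 8 * c) ^ 2)
    by (apply Rmult_lt_0_compat; apply pow_lt; lra).
  apply Rle_trans with (c ^ 3 * t / ((7 / 8 * c) ^ 2 * (3 / 8 * c) ^ 2)).
  - apply Rmult_le_compat_l; [apply Rmult_le_pos; [apply pow_le|]; lra|].
    now apply Rinv_le_contravar.
  - replace (c ^ 3 * t / ((7 / 8 * c) ^ 2 * (3 / 8 * c) ^ 2)) with (4096 / 441 * t / c)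
      by (field; lra).
    apply Rmult_le_compat_r; [apply Rlt_le, Rinv_0_lt_compat; lra|lra].
Qed.

Lemma ln_2n1_ge (n : nat) : (8 <= n)%nat -> 5 / 2 <= ln (2 * INR n + 1).
Proof.
  intro Hn.
  assert (N8 : 8 <= INR n) by (replace 8 with (INR 8) by (simpl; ring); now apply le_INR).
  assert (E5 : exp (5 / 2) * exp (5 / 2) <= 243).
  { rewrite <- exp_plus. replace (5 / 2 + 5 / 2) with (1 + 1 + 1 + 1 + 1) by field.
    rewrite !exp_plus. pose proof exp_le_3; pose proof (exp_pos 1).
    assert (exp 1 * exp 1 <= 9) by nra. assert (exp 1 * exp 1 * exp 1 <= 27) by nra.
    assert (exp 1 * exp 1 * exp 1 * exp 1 <= 81) by nra. nra. }
  rewrite <- (ln_exp (5 / 2)). apply ln_le; [apply exp_pos|].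
  pose proof (exp_pos (5 / 2)). nra.
Qed.

Lemma RInt_comp_opp (f : R -> R) (a b : R) :
  ex_RInt f (- b) (- a) -> RInt f (- b) (- a) = RInt (fun y => f (- y)) a b.
Proof.
  intro Hf.
  apply (RInt_correct (V := R_CompleteNormedModule)) in Hf.
  apply is_RInt_comp_opp, is_RInt_swap, is_RInt_opp in Hf.
  rewrite opp_opp in Hf.
  symmetry. apply is_RInt_unique.
  eapply is_RInt_ext; [|exact Hf]. intros y _. unfold opp; simpl; ring.
Qed.

Lemma RInt_kernel_n_sq_tails_le (n : nat) (x a M : R) :
  Rabs x < a -> a <= M ->
  RInt (fun y => kernel_n n x y ^ 2) (- M) (- a) + RInt (fun y => kernel_n n x y ^ 2) a M
  <= sqrt2k (S n) ^ 2 / 4 * hermite_energy n x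
     * (RInt (fun y => hermite_energy n y / (y - - x) ^ 2) a M
        + RInt (fun y => hermite_energy n y / (y - x) ^ 2) a M).
Proof.
  intros Hx HaM. apply Rabs_def2 in Hx.
  rewrite RInt_comp_opp by apply ex_RInt_kernel_n_sq.
  rewrite (RInt_ext (fun y => kernel_n n x (- y) ^ 2) (fun y => kernel_n n (- x) y ^ 2))
    by (intros; now rewrite kernel_n_opp).
  pose proof (RInt_kernel_n_sq_le n (- x) a M ltac:(lra) HaM) as Hm.
  pose proof (RInt_kernel_n_sq_le n x a M ltac:(lra) HaM) as Hp.
  rewrite hermite_energy_opp in Hm. rewrite Rmult_plus_distr_l. lra.
Qed.

Lemma RInt_kernel_n_sq_tails_le_energy0 (n : nat) (T x M : R) :
  let c := sqrt2k (S n) in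
  0 < T -> T < c -> Rabs x <= T -> 2 * T <= M ->
  RInt (fun y => kernel_n n x y ^ 2) (- M) (- (2 * T))
  + RInt (fun y => kernel_n n x y ^ 2) (2 * T) M
  <= c ^ 4 * hermite_energy n 0 / (4 * (c - T) ^ 2)
     * (RInt (fun y => hermite_energy n y / (y - - x) ^ 2) (2 * T) M
        + RInt (fun y => hermite_energy n y / (y - x) ^ 2) (2 * T) M).
Proof.
  intros c HT HTc Hx HM.
  eapply Rle_trans; [apply RInt_kernel_n_sq_tails_le; lra|].
  apply Rmult_le_compat_r.
  { apply Rplus_le_le_0_compat; apply RInt_ge_0; try lra;
      try (apply ex_RInt_energy_weight; apply Rabs_le_between in Hx; lra);
      intros; apply energy_weight_nonneg. }
  pose proof (hermite_energy_le_center n x ltac:(fold c; lra)) as HQ; fold c in HQ.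
  assert (HcT : (c - T) ^ 2 <= (c - Rabs x) ^ 2) by (pose proof (Rabs_pos x); apply pow_incr; lra).
  assert (0 < (c - T) ^ 2) by (apply pow_lt; lra).
  replace (c ^ 4 * hermite_energy n 0 / (4 * (c - T) ^ 2))
    with (c ^ 2 / 4 * (c ^ 2 * hermite_energy n 0 / (c - T) ^ 2)) by (field; lra).
  apply Rmult_le_compat_l; [pose proof (pow2_ge_0 c); lra|].
  apply Rmult_le_reg_r with ((c - T) ^ 2); [assumption|].
  unfold Rdiv; rewrite Rmult_assoc, Rinv_l, Rmult_1_r by lra.
  pose proof (hermite_energy_nonneg n x). nra.
Qed.

Lemma energy_weight_pair_le_crude (n : nat) (T x M : R) :
  0 < T -> Rabs x <= T -> 2 * T <= M ->
  RInt (fun y => hermite_energy n y / (y - - x) ^ 2) (2 * T) M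
  + RInt (fun y => hermite_energy n y / (y - x) ^ 2) (2 * T) M
  <= 4 * sqrt PI / T ^ 2.
Proof.
  intros HT Hx HM. apply Rabs_le_between in Hx.
  assert (Hw : forall z, - T <= z <= T ->
            RInt (fun y => hermite_energy n y / (y - z) ^ 2) (2 * T) M <= 2 * sqrt PI / T ^ 2).
  { intros z Hz. eapply Rle_trans; [apply RInt_energy_weight_le; lra|].
    apply Rmult_le_compat_l; [pose proof (sqrt_pos PI); lra|].
    apply Rinv_le_contravar; [apply pow_lt; lra|apply pow_incr; lra]. }
  pose proof (Hw (- x) ltac:(lra)); pose proof (Hw x ltac:(lra)). lra.
Qed.

Lemma energy_weight_pair_le_sharp (n : nat) (T x M : R) :
  let c := sqrt2k (S n) in
  0 < T -> 4 * T <= c -> Rabs x <= T -> 2 * T <= M ->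
  RInt (fun y => hermite_energy n y / (y - - x) ^ 2) (2 * T) M
  + RInt (fun y => hermite_energy n y / (y - x) ^ 2) (2 * T) M
  <= hermite_energy n 0 * (c / (c - T)) ^ 2 * (404 / (300 * T) + 202 / c)
     + 4 * sqrt PI / (c / 2 - T) ^ 2.
Proof.
  intros c HT Hc Hx HM. apply Rabs_le_between in Hx.
  set (e := hermite_energy n 0). set (K := (c / (c - T)) ^ 2).
  assert (He : 0 <= e) by apply hermite_energy_nonneg.
  assert (HK : 0 <= K) by apply pow2_ge_0.
  assert (Hw : forall z, - T <= z <= T ->
            RInt (fun y => hermite_energy n y / (y - z) ^ 2) (2 * T) M
            <= e * K * (101 / 100 / (2 * T - z) + 101 / c) + 2 * sqrt PI / (c / 2 - T) ^ 2).
  { intros z Hz.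
    eapply Rle_trans; [apply RInt_energy_weight_le_sharp; fold c; lra|]. fold c e.
    apply Rplus_le_compat.
    - apply Rmult_le_compat_r.
      { apply Rplus_le_le_0_compat; apply Rmult_le_pos; try lra;
          apply Rlt_le, Rinv_0_lt_compat; lra. }
      apply Rmult_le_compat_l; [exact He|]. apply pow_incr. split.
      + apply Rmult_le_pos; [lra|apply Rlt_le, Rinv_0_lt_compat; lra].
      + apply Rmult_le_compat_l; [lra|apply Rinv_le_contravar; lra].
    - apply Rmult_le_compat_l; [pose proof (sqrt_pos PI); lra|].
      apply Rinv_le_contravar; [apply pow_lt; lra|apply pow_incr; lra]. }
  assert (Hsum : 101 / 100 / (2 * T - - x) + 101 / 100 / (2 * T - x) <= 404 / (300 * T)).
  { replace (101 / 100 / (2 * T - - x) + 101 / 100 / (2 * T - x))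
      with (101 / 100 * (4 * T / ((2 * T - x) * (2 * T + x)))) by (field; lra).
    replace (404 / (300 * T)) with (101 / 100 * (4 * T / (3 * T ^ 2))) by (field; lra).
    apply Rmult_le_compat_l; [lra|].
    apply Rmult_le_compat_l; [lra|]. apply Rinv_le_contravar; nra. }
  pose proof (Hw (- x) ltac:(lra)); pose proof (Hw x ltac:(lra)).
  assert (e * K * (101 / 100 / (2 * T - - x) + 101 / 100 / (2 * T - x) + 202 / c)
          <= e * K * (404 / (300 * T) + 202 / c))
    by (apply Rmult_le_compat_l; [apply Rmult_le_pos|]; lra).
  lra.
Qed.

Lemma kernel_tails_le (n : nat) (T x M : R) :
  let c := sqrt2k (S n) in
  2 <= T -> (8 <= n)%nat -> 2 * T < c -> Rabs x <= T -> 2 * T <= M ->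
  RInt (fun y => kernel_n n x y ^ 2) (- M) (- (2 * T))
  + RInt (fun y => kernel_n n x y ^ 2) (2 * T) M
  <= 2 / (PI ^ 2 * T) + 30 * T ^ 2 / c.
Proof.
  intros c HT Hn Hc Hx HM.
  set (e := hermite_energy n 0). set (s := sqrt PI).
  assert (He : 0 <= e) by apply hermite_energy_nonneg.
  assert (Hs : 0 < s) by apply sqrt_lt_R0, PI_RGT_0.
  assert (Hs2 : s ^ 2 = PI) by (apply pow2_sqrt, Rlt_le, PI_RGT_0).
  assert (HPI : 2 <= s ^ 2 <= 4) by (rewrite Hs2; pose proof PI2_3_2; pose proof PI_4; lra).
  pose proof (hermite_energy_0_bound n Hn) as Hce; fold c e s in Hce.
  assert (Hc0 : 0 < c) by lra.
  assert (Ht : 0 <= c * e * s) by (apply Rmult_le_pos; [apply Rmult_le_pos|]; lra).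
  assert (HK : 0 <= c ^ 4 * e / (4 * (c - T) ^ 2)).
  { apply Rmult_le_pos; [apply Rmult_le_pos; [apply pow_le|]|apply Rlt_le, Rinv_0_lt_compat]; nra. }
  eapply Rle_trans; [apply RInt_kernel_n_sq_tails_le_energy0; fold c; lra|]. fold c e.
  assert (0 < 2 / (PI ^ 2 * T)).
  { apply Rmult_lt_0_compat; [lra|]. apply Rinv_0_lt_compat, Rmult_lt_0_compat; [|lra].
    apply pow_lt, PI_RGT_0. }
  destruct (Rle_lt_dec c (8 * T)) as [Hc8|Hc8].
  - eapply Rle_trans.
    { apply Rmult_le_compat_l; [exact HK|]. apply energy_weight_pair_le_crude; lra. }
    fold s. replace (c ^ 4 * e / (4 * (c - T) ^ 2) * (4 * s / T ^ 2))
      with (c ^ 3 * (c * e * s) / ((c - T) ^ 2 * T ^ 2)) by (field; lra).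
    pose proof (tails_crude_numeric c T (c * e * s) HT Hc Hc8 Ht Hce). lra.
  - eapply Rle_trans.
    { apply Rmult_le_compat_l; [exact HK|]. apply energy_weight_pair_le_sharp; fold c; lra. }
    fold c e s.
    replace (c ^ 4 * e / (4 * (c - T) ^ 2)
             * (e * (c / (c - T)) ^ 2 * (404 / (300 * T) + 202 / c) + 4 * s / (c / 2 - T) ^ 2))
      with ((c * e) ^ 2 * (c ^ 4 / (c - T) ^ 4) / 4 * (404 / (300 * T) + 202 / c)
            + c ^ 3 * (c * e * s) / ((c - T) ^ 2 * (c / 2 - T) ^ 2)) by (field; lra).
    pose proof (tails_sharp_near_numeric c T (c * e) s HT ltac:(lra) Hs HPI Hce).
    pose proof (tails_sharp_far_numeric c T (c * e * s) ltac:(lra) ltac:(lra) Ht Hce).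
    replace (PI ^ 2) with (s ^ 4) by (rewrite <- Hs2; ring).
    assert (83 / c <= 30 * T ^ 2 / c).
    { apply Rmult_le_compat_r; [apply Rlt_le, Rinv_0_lt_compat, Hc0|nra]. }
    unfold Rdiv in *. lra.
Qed.

Lemma tail_rate_le (n : nat) (T : R) :
  (8 <= n)%nat ->
  30 * T ^ 2 / sqrt2k (S n) <= 12 * T ^ 2 / sqrt (2 * INR n + 1) * ln (2 * INR n + 1).
Proof.
  intro Hn.
  pose proof (ln_2n1_ge n Hn). pose proof (pos_INR n). pose proof (pow2_ge_0 T).
  assert (Hsq : 0 < sqrt (2 * INR n + 1)) by (apply sqrt_lt_R0; lra).
  assert (Hsc : sqrt (2 * INR n + 1) <= sqrt2k (S n))
    by (apply sqrt_le_1; rewrite ?S_INR; lra).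
  apply Rle_trans with (12 * T ^ 2 / sqrt (2 * INR n + 1) * (5 / 2)).
  - replace (12 * T ^ 2 / sqrt (2 * INR n + 1) * (5 / 2)) with (30 * T ^ 2 / sqrt (2 * INR n + 1))
      by (field; lra).
    apply Rmult_le_compat_l; [lra|]. now apply Rinv_le_contravar.
  - apply Rmult_le_compat_l; [|lra].
    apply Rmult_le_pos; [lra|apply Rlt_le, Rinv_0_lt_compat, Hsq].
Qed.

Theorem mainTheorem6 (T : R) (n : nat) (x : R) :
  2 <= T -> 2 * T ^ 2 <= INR n -> Rabs x <= T ->
  forall M : R, 2 * T <= M ->
  exists (pr1 : Riemann_integrable (fun y => (kernel_n n x y) ^ 2) (- M) (- (2 * T)))
         (pr2 : Riemann_integrable (fun y => (kernel_n n x y) ^ 2) (2 * T) M),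
    RiemannInt pr1 + RiemannInt pr2 <=
      2 / (PI ^ 2 * T) + 12 * T ^ 2 / sqrt (2 * INR n + 1) * ln (2 * INR n + 1).
Proof.
  intros HT Hn Hx M HM.
  exists (ex_RInt_Reals_0 _ _ _ (ex_RInt_kernel_n_sq n x (- M) (- (2 * T)))).
  exists (ex_RInt_Reals_0 _ _ _ (ex_RInt_kernel_n_sq n x (2 * T) M)).
  rewrite <- !RInt_Reals.
  assert (Hn8 : (8 <= n)%nat) by (apply INR_le; simpl; nra).
  assert (Hc : 2 * T < sqrt2k (S n)).
  { apply Rsqr_incrst_0; [|lra|apply Rlt_le, sqrt2k_S_pos].
    rewrite !Rsqr_pow2, sqrt2k_sq, S_INR. nra. }
  eapply Rle_trans; [apply kernel_tails_le; assumption|].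
  apply Rplus_le_compat_l, tail_rate_le, Hn8.
Qed.
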